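(* Let $\Phi: H_n\to H_k$ be a trace-preserving unital linear map and let $\rho\in H_n\otimes H_m$ be Hermitian. Then \[ {\rm Tr}\left[\left((\Phi\otimes\mathrm{id})(\rho)\right)^2\right]\leq\left(\frac1k-\frac{\|A_\Phi\|_\infty}{n}\right){\rm Tr}\left[\rho_K^2\right]+\|A_\Phi\|_\infty\,{\rm Tr}\left[\rho^2\right], \] where $\mathrm{id}$ is the identity map on $H_m$ and $\rho_K={\rm Tr}_{H_n}[\rho]\in H_m$ is the partial trace over the first factor.
   Context: $H_n$ is the real vector space of $n\times n$ Hermitian matrices with inner product ${\rm Tr}(XY)$, and $H_{n,0}$ its subspace of traceless matrices. A linear map $\Phi:H_n\to H_k$ is unital if $\Phi(I_n/n)=I_k/k$. Fix an orthonormal basis $M_1,\dots,M_{n^2-1}$ of $H_{n,0}$ and define the real symmetric positive semidefinite matrix $A_\Phi$ by $(A_\Phi)_{i,j}={\rm Tr}[\Phi(M_i)\Phi(M_j)]$, $1\le i,j\le n^2-1$; $\|A_\Phi\|_\infty$ is its largest eigenvalue (independent of the chosen basis). *)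

From HB Require Import structures.
From mathcomp Require Import all_boot all_order all_algebra.
From mathcomp Require Import sesquilinear spectral.
Set Implicit Arguments. Unset Strict Implicit. Unset Printing Implicit Defensive.
Import Order.TTheory GRing.Theory Num.Theory.
Local Open Scope ring_scope.
Local Open Scope sesquilinear_scope.

Definition herm {C : numClosedFieldType} {n : nat} (A : 'M[C]_n) : Prop :=
  A \is hermsymmx.

Definition ctr {C : numClosedFieldType} {n m : nat} (A : 'M[C]_(n, m)) : 'M[C]_(m, n) :=
  A ^t*.

(* Tensor product H_n (x) H_m realised on 'I_(n*m), with the pair (a, i)
   (a : 'I_n first factor, i : 'I_m second factor) indexed by mxvec_index a i. *)
Definition tunindex (n m : nat) (p : 'I_(n * m)) : 'I_n * 'I_m :=
  enum_val (cast_ord (esym (mxvec_cast n m)) p).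

Definition blk {C : numClosedFieldType} {n m : nat} (rho : 'M[C]_(n * m))
  (i j : 'I_m) : 'M[C]_n :=
  \matrix_(a, b) rho (mxvec_index a i) (mxvec_index b j).

Definition ptrace1 {C : numClosedFieldType} {n m : nat} (rho : 'M[C]_(n * m)) : 'M[C]_m :=
  \matrix_(i, j) \sum_(a < n) rho (mxvec_index a i) (mxvec_index a j).

(* A real-linear map Phi : H_n -> H_k (given as a function on all matrices,
   only its values on Hermitian matrices matter) extended complex-linearly to
   M_n : Phi_C X = Phi(Re X) + i Phi(Im X), with Re X = (X + X^* )/2,
   Im X = (X - X^* )/(2i). *)
Definition cext {C : numClosedFieldType} {n k : nat} (Phi : 'M[C]_n -> 'M[C]_k)
  (X : 'M[C]_n) : 'M[C]_k :=
  Phi ((2%:R)^-1 *: (X + ctr X)) + 'i *: Phi ((2%:R * 'i)^-1 *: (X - ctr X)).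

Definition tens_id {C : numClosedFieldType} {n k m : nat} (Phi : 'M[C]_n -> 'M[C]_k)
  (rho : 'M[C]_(n * m)) : 'M[C]_(k * m) :=
  \matrix_(p, q) cext Phi (blk rho (tunindex p).2 (tunindex q).2)
                    (tunindex p).1 (tunindex q).1.

Definition herm_linear {C : numClosedFieldType} {n k : nat} (Phi : 'M[C]_n -> 'M[C]_k) : Prop :=
  (forall X : 'M[C]_n, herm X -> herm (Phi X)) /\
  (forall (a : C) (X Y : 'M[C]_n), a \is Num.real -> herm X -> herm Y ->
     Phi (a *: X + Y) = a *: Phi X + Phi Y).

Definition trace_preserving {C : numClosedFieldType} {n k : nat} (Phi : 'M[C]_n -> 'M[C]_k) : Prop :=
  forall X : 'M[C]_n, herm X -> \tr (Phi X) = \tr X.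

Definition unital {C : numClosedFieldType} {n k : nat} (Phi : 'M[C]_n -> 'M[C]_k) : Prop :=
  Phi ((n%:R)^-1 *: 1%:M) = (k%:R)^-1 *: 1%:M.

Definition orthonormal_basis_H0 {C : numClosedFieldType} {n : nat}
  (M : 'I_(n ^ 2 - 1) -> 'M[C]_n) : Prop :=
  (forall i, herm (M i) /\ \tr (M i) = 0) /\
  (forall i j, \tr (M i *m M j) = (i == j)%:R) /\
  (forall X : 'M[C]_n, herm X -> \tr X = 0 ->
     exists c : 'I_(n ^ 2 - 1) -> C,
       (forall i, c i \is Num.real) /\ X = \sum_i c i *: M i).

Definition A_Phi {C : numClosedFieldType} {n k : nat} (Phi : 'M[C]_n -> 'M[C]_k)
  (M : 'I_(n ^ 2 - 1) -> 'M[C]_n) : 'M[C]_(n ^ 2 - 1) :=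
  \matrix_(i, j) \tr (Phi (M i) *m Phi (M j)).

Definition largest_eigenvalue {C : numClosedFieldType} {N : nat} (A : 'M[C]_N) (lam : C) : Prop :=
  eigenvalue A lam /\ (forall mu, eigenvalue A mu -> mu <= lam).

From HB Require Import structures.
From mathcomp Require Import all_boot all_order all_algebra.
From mathcomp Require Import sesquilinear spectral.
From mathcomp Require Import ring.
Import Order.TTheory GRing.Theory Num.Theory.
Set Implicit Arguments. Unset Strict Implicit. Unset Printing Implicit Defensive.
Local Open Scope ring_scope.
Local Open Scope sesquilinear_scope.

(** By unitality and trace preservation, the complex-linear extension Phi_C of
    Phi sends the scalar part of a matrix X to the scalar part and traceless
    Hermitian matrices to traceless Hermitian matrices.  Writing
    X = K1 + i K2 + (Tr X / n) I with K1, K2 traceless Hermitian, both Tr(X X^* )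
    and Tr(Phi_C(X) Phi_C(X)^* ) therefore split orthogonally, and the Rayleigh
    bound Tr(Phi(K)^2) <= ||A_Phi|| Tr(K^2), read in the coordinates of K in the
    basis M, gives
      Tr(Phi_C(X) Phi_C(X)^* ) <= (1/k - ||A_Phi||/n) |Tr X|^2 + ||A_Phi|| Tr(X X^* ).
    The blocks of (Phi (x) id)(rho) with respect to H_m are Phi_C of the blocks
    B_ij of rho, and since B_ji = B_ij^*, the three traces in the theorem are the
    sums over i, j of the three terms above for X = B_ij. *)

Section ConjugateTranspose.
Variable C : numClosedFieldType.

Lemma trmxCD a b (X Y : 'M[C]_(a, b)) : (X + Y) ^t* = X ^t* + Y ^t*.
Proof. by rewrite linearD map_mxD. Qed.

Lemma trmxCN a b (X : 'M[C]_(a, b)) : (- X) ^t* = - X ^t*.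
Proof. by rewrite linearN map_mxN. Qed.

Lemma trmxCB a b (X Y : 'M[C]_(a, b)) : (X - Y) ^t* = X ^t* - Y ^t*.
Proof. by rewrite trmxCD trmxCN. Qed.

Lemma trmxCZ a b c (X : 'M[C]_(a, b)) : (c *: X) ^t* = c^* *: X ^t*.
Proof. by rewrite linearZ map_mxZ. Qed.

Lemma trmxC1 a : (1%:M : 'M[C]_a) ^t* = 1%:M.
Proof. by rewrite trmx1 map_mx1. Qed.

Lemma trmxCM a b c (X : 'M[C]_(a, b)) (Y : 'M[C]_(b, c)) :
  (X *m Y) ^t* = Y ^t* *m X ^t*.
Proof. by rewrite trmx_mul map_mxM. Qed.

Lemma mxtrace_trmxC a (X : 'M[C]_a) : \tr (X ^t*) = (\tr X)^*.
Proof. by rewrite /mxtrace rmorph_sum; apply: eq_bigr => i _; rewrite !mxE. Qed.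

End ConjugateTranspose.

Section Hermitian.
Variable C : numClosedFieldType.
Implicit Types (a : nat) (c : C).

Lemma hermP a (X : 'M[C]_a) : herm X <-> X = X ^t*.
Proof.
rewrite /herm; split => [/is_hermitianmxP|eqX]; first by rewrite expr0 scale1r.
by apply/is_hermitianmxP; rewrite expr0 scale1r.
Qed.

Lemma herm_mxtrace_real a (X : 'M[C]_a) : herm X -> \tr X \is Num.real.
Proof. by move/hermP => eqX; rewrite CrealE -mxtrace_trmxC -eqX. Qed.

Lemma herm0 a : herm (0 : 'M[C]_a).
Proof. by apply/hermP; rewrite linear0 map_mx0. Qed.

Lemma herm1 a : herm (1%:M : 'M[C]_a).
Proof. by apply/hermP; rewrite trmxC1. Qed.

Lemma hermD a (X Y : 'M[C]_a) : herm X -> herm Y -> herm (X + Y).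
Proof. by move=> /hermP eqX /hermP eqY; apply/hermP; rewrite trmxCD -eqX -eqY. Qed.

Lemma hermN a (X : 'M[C]_a) : herm X -> herm (- X).
Proof. by move=> /hermP eqX; apply/hermP; rewrite trmxCN -eqX. Qed.

Lemma hermB a (X Y : 'M[C]_a) : herm X -> herm Y -> herm (X - Y).
Proof. by move=> hX hY; apply: hermD => //; apply: hermN. Qed.

Lemma hermZ a c (X : 'M[C]_a) : c \is Num.real -> herm X -> herm (c *: X).
Proof. by move=> cR /hermP eqX; apply/hermP; rewrite trmxCZ -eqX conj_Creal. Qed.

Definition re_mx a (X : 'M[C]_a) := 2%:R^-1 *: (X + X ^t*).
Definition im_mx a (X : 'M[C]_a) := (2%:R * 'i)^-1 *: (X - X ^t*).

Lemma herm_re_mx a (X : 'M[C]_a) : herm (re_mx X).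
Proof.
apply/hermP; rewrite trmxCZ trmxCD trmxCK conj_Creal; first by rewrite addrC.
by rewrite realV realn.
Qed.

Lemma herm_im_mx a (X : 'M[C]_a) : herm (im_mx X).
Proof.
have conj_inv2i : ((2%:R * 'i)^-1 : C)^* = - (2%:R * 'i)^-1.
  by rewrite fmorphV /= rmorphM /= rmorph_nat conjCi mulrN invrN.
by apply/hermP; rewrite trmxCZ trmxCB trmxCK conj_inv2i scaleNr -scalerN opprB.
Qed.

Lemma re_im_mxE a (X : 'M[C]_a) : X = re_mx X + 'i *: im_mx X.
Proof.
have nz2 : (2%:R : C) != 0 by rewrite pnatr_eq0.
have nzi := neq0Ci C.
by apply/matrixP => i j; rewrite !mxE; field.
Qed.

Lemma re_mx_trmxC a (X : 'M[C]_a) : re_mx (X ^t*) = re_mx X.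
Proof. by rewrite /re_mx trmxCK addrC. Qed.

Lemma im_mx_trmxC a (X : 'M[C]_a) : im_mx (X ^t*) = - im_mx X.
Proof. by rewrite /im_mx trmxCK -scalerN opprB. Qed.

End Hermitian.

Arguments herm0 {C a}.
Arguments herm1 {C a}.

Section RealLinearMap.
Variables (C : numClosedFieldType) (n k : nat) (Phi : 'M[C]_n -> 'M[C]_k).
Hypothesis linPhi : herm_linear Phi.

Lemma herm_linear0 : Phi 0 = 0.
Proof.
have [_ PhiL] := linPhi.
have := PhiL (-1) 0 0 (ltac:(by rewrite realN real1)) herm0 herm0.
by rewrite scaler0 addr0 scaleN1r addNr.
Qed.

Lemma herm_linearZ c X : c \is Num.real -> herm X -> Phi (c *: X) = c *: Phi X.
Proof.
move=> cR hX; have [_ PhiL] := linPhi.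
by have := PhiL c X 0 cR hX herm0; rewrite !addr0 herm_linear0 addr0.
Qed.

Lemma herm_linearD X Y : herm X -> herm Y -> Phi (X + Y) = Phi X + Phi Y.
Proof.
move=> hX hY; have [_ PhiL] := linPhi.
by have := PhiL 1 X Y (@real1 _) hX hY; rewrite !scale1r.
Qed.

Lemma herm_linearN X : herm X -> Phi (- X) = - Phi X.
Proof. by move=> hX; rewrite -scaleN1r herm_linearZ ?scaleN1r // realN real1. Qed.

Lemma herm_linear_sum (I : finType) (c : I -> C) (F : I -> 'M[C]_n) :
  (forall i, c i \is Num.real) -> (forall i, herm (F i)) ->
  Phi (\sum_i c i *: F i) = \sum_i c i *: Phi (F i).
Proof.
move=> cR hF.
pose R X Y := herm X /\ Phi X = Y.
have [] : R (\sum_i c i *: F i) (\sum_i c i *: Phi (F i)) => //.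
apply: big_ind2 => [|X1 Y1 X2 Y2 [hX1 <-] [hX2 <-]|i _].
- by split; [exact: herm0 | exact: herm_linear0].
- by split; [exact: hermD | exact: herm_linearD].
- by split; [exact: hermZ | exact: herm_linearZ].
Qed.

Lemma cextE X : cext Phi X = Phi (re_mx X) + 'i *: Phi (im_mx X).
Proof. by []. Qed.

Lemma cext_trmxC X : cext Phi (X ^t*) = (cext Phi X) ^t*.
Proof.
have [hermPhi _] := linPhi.
rewrite !cextE re_mx_trmxC im_mx_trmxC herm_linearN; last exact: herm_im_mx.
rewrite trmxCD trmxCZ conjCi.
have /hermP <- := hermPhi _ (herm_re_mx X).
have /hermP <- := hermPhi _ (herm_im_mx X).
by rewrite scaleNr scalerN.
Qed.

End RealLinearMap.

Section LargestEigenvalue.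
Variables (C : numClosedFieldType) (N : nat) (A : 'M[C]_N).
Hypothesis normalA : A \is normalmx.

Let P := spectralmx A.
Let d := spectral_diag A.

Let mulmx_trmxC_P : P *m P ^t* = 1%:M.
Proof. exact/unitarymxP/spectral_unitarymx. Qed.

Let mulmx_P_trmxC : P ^t* *m P = 1%:M.
Proof. by rewrite -invmx_unitary ?spectral_unitarymx // mulVmx // spectral_unit. Qed.

Let spectralA : A = P ^t* *m diag_mx d *m P.
Proof.
have /orthomx_spectralP eqA := normalA.
by rewrite {1}eqA invmx_unitary ?spectral_unitarymx.
Qed.

Lemma spectral_diag_eigenvalue j : eigenvalue A (d 0 j).
Proof.
apply/eigenvalueP; exists (row j P).
  rewrite -row_mul spectralA !mulmxA mulmx_trmxC_P mul1mx.
  apply/rowP => l; rewrite !mxE (bigD1 j) //= big1 ?addr0.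
    by rewrite !mxE eqxx mulr1n.
  by move=> i /negbTE neq_ij; rewrite !mxE eq_sym neq_ij mulr0n mul0r.
apply/eqP => /(congr1 (mulmx^~ (P ^t*))); rewrite -row_mul mulmx_trmxC_P mul0mx.
by move/rowP/(_ j); rewrite !mxE eqxx => /eqP; rewrite oner_eq0.
Qed.

Lemma mxquad_le_largest_eigenvalue lam (w : 'rV[C]_N) :
  largest_eigenvalue A lam ->
  (w *m A *m w ^t*) 0 0 <= lam * (w *m w ^t*) 0 0.
Proof.
move=> [_ maxlam]; set u := w *m P ^t*.
have -> : w *m A *m w ^t* = u *m diag_mx d *m u ^t*.
  by rewrite spectralA /u !trmxCM trmxCK !mulmxA.
have -> : w *m w ^t* = u *m u ^t*.
  by rewrite /u trmxCM trmxCK -!mulmxA (mulmxA (P ^t*)) mulmx_P_trmxC mul1mx.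
rewrite mul_mx_diag !mxE mulr_sumr; apply: ler_sum => j _.
rewrite !mxE mulrAC [lam * _]mulrC.
apply: ler_wpM2l; last exact/maxlam/spectral_diag_eigenvalue.
by rewrite mul_conjC_ge0.
Qed.

End LargestEigenvalue.

Definition trless_mx {C : numClosedFieldType} {n : nat} (X : 'M[C]_n) : 'M[C]_n :=
  X - (\tr X / n%:R) *: 1%:M.

Section TracelessPart.
Variables (C : numClosedFieldType) (n : nat).
Implicit Types X : 'M[C]_n.

Lemma mxtrace_trless_mx X : (0 < n)%N -> \tr (trless_mx X) = 0.
Proof.
move=> n_gt0; rewrite /trless_mx raddfB /= mxtraceZ mxtrace1 divfK ?subrr //.
by rewrite pnatr_eq0 -lt0n.
Qed.

Lemma herm_trless_mx X : herm X -> herm (trless_mx X).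
Proof.
move=> hX; apply: hermB => //; apply: hermZ; last exact: herm1.
by rewrite realM ?realV ?realn ?herm_mxtrace_real.
Qed.

Lemma trless_re_im_mxE X :
  X = trless_mx (re_mx X) + 'i *: trless_mx (im_mx X) + (\tr X / n%:R) *: 1%:M.
Proof.
have := re_im_mxE X; move: (re_mx X) (im_mx X) => R I ->.
rewrite /trless_mx mxtraceD mxtraceZ.
by apply/matrixP => i j; rewrite !mxE; ring.
Qed.

Lemma mxtrace_mulmx_trmxC_decomp (W V : 'M[C]_n) s :
  herm W -> herm V -> \tr W = 0 -> \tr V = 0 ->
  \tr ((W + 'i *: V + s *: 1%:M) *m (W + 'i *: V + s *: 1%:M) ^t*) =
  \tr (W *m W) + \tr (V *m V) + n%:R * (s * s^*).
Proof.
move=> /hermP eqW /hermP eqV trW trV.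
rewrite !trmxCD !trmxCZ trmxC1 -eqW -eqV conjCi.
rewrite !mulmxDl !mulmxDr -!scalemxAl -!scalemxAr !mul1mx !mulmx1.
rewrite !mxtraceD !mxtraceZ mxtrace1 trW trV (mxtrace_mulC V W) !mulr0 !addr0.
have i2 : 'i * (- 'i) = 1 :> C by rewrite mulrN -expr2 sqrCi opprK.
rewrite mulrA i2 mul1r; ring.
Qed.

End TracelessPart.

Lemma mxtrace_sqr_lincomb (C : numClosedFieldType) a (I : finType) (c : I -> C)
    (G : I -> 'M[C]_a) :
  \tr ((\sum_i c i *: G i) *m (\sum_i c i *: G i)) =
  \sum_i \sum_j c i * c j * \tr (G i *m G j).
Proof.
rewrite mulmx_suml raddf_sum /=; apply: eq_bigr => i _.
rewrite mulmx_sumr raddf_sum /=; apply: eq_bigr => j _.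
by rewrite -scalemxAl -scalemxAr !mxtraceZ mulrA.
Qed.

Section ChannelBound.
Variables (C : numClosedFieldType) (n k : nat) (Phi : 'M[C]_n -> 'M[C]_k).
Variables (M : 'I_(n ^ 2 - 1) -> 'M[C]_n) (lam : C).
Hypotheses (n_gt0 : (0 < n)%N) (k_gt0 : (0 < k)%N) (linPhi : herm_linear Phi).
Hypotheses (tpPhi : trace_preserving Phi) (unPhi : unital Phi).
Hypotheses (basisM : orthonormal_basis_H0 M) (lamP : largest_eigenvalue (A_Phi Phi M) lam).

Lemma herm_A_Phi : A_Phi Phi M \is hermsymmx.
Proof.
have [hermPhi _] := linPhi; have [hermM _] := basisM.
apply/hermP/matrixP => i j; rewrite !mxE -mxtrace_trmxC trmxCM.
have /hermP <- := hermPhi _ (hermM i).1.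
by have /hermP <- := hermPhi _ (hermM j).1.
Qed.

Lemma traceless_herm_linear_le H : herm H -> \tr H = 0 ->
  \tr (Phi H *m Phi H) <= lam * \tr (H *m H).
Proof.
move=> hH trH; have [hermM [orthoM spanM]] := basisM.
have [c [cR ->]] := spanM H hH trH.
(* both sides are quadratic forms in the real coordinates c of H: the left one
   has matrix A_Phi, the right one the identity *)
rewrite herm_linear_sum // => [|i]; last exact: (hermM i).1.
have := mxquad_le_largest_eigenvalue (hermitian_normalmx herm_A_Phi) (\row_i c i) lamP.
rewrite !mxtrace_sqr_lincomb; congr (_ <= _ * _).
- rewrite mxE exchange_big /=; apply: eq_bigr => j _.
  rewrite !mxE mulr_suml; apply: eq_bigr => i _.
  by rewrite !mxE conj_Creal // mulrAC.
- rewrite mxE; apply: eq_bigr => i _; rewrite (bigD1 i) //= big1 ?addr0.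
    by rewrite !mxE conj_Creal // orthoM eqxx mulr1.
  by move=> j /negbTE neq_ji; rewrite orthoM eq_sym neq_ji mulr0.
Qed.

Lemma herm_linear_trless H : herm H ->
  Phi H = Phi (trless_mx H) + (\tr H / k%:R) *: 1%:M.
Proof.
have [_ PhiL] := linPhi.
have hE : herm ((n%:R)^-1 *: 1%:M : 'M[C]_n).
  by apply: hermZ; [rewrite realV realn | exact: herm1].
move=> hH.
have {1}-> : H = \tr H *: ((n%:R)^-1 *: 1%:M) + trless_mx H.
  by rewrite scalerA addrC subrK.
rewrite PhiL ?unPhi ?scalerA 1?addrC //; first exact: herm_mxtrace_real.
exact: herm_trless_mx.
Qed.

Lemma cext_trless_re_im X :
  cext Phi X = Phi (trless_mx (re_mx X)) + 'i *: Phi (trless_mx (im_mx X))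
               + (\tr X / k%:R) *: 1%:M.
Proof.
have trX : \tr X = \tr (re_mx X) + 'i * \tr (im_mx X).
  by rewrite {1}[X]re_im_mxE mxtraceD [\tr (_ *: im_mx X)]mxtraceZ.
rewrite cextE (herm_linear_trless (herm_re_mx X)).
rewrite (herm_linear_trless (herm_im_mx X)) trX.
by apply/matrixP => i j; rewrite !mxE; ring.
Qed.

Lemma mxtrace_cext_le X :
  \tr (cext Phi X *m (cext Phi X) ^t*) <=
  ((k%:R)^-1 - lam / n%:R) * (\tr X * (\tr X)^*) + lam * \tr (X *m X ^t*).
Proof.
have [hermPhi _] := linPhi.
set K1 := trless_mx (re_mx X); set K2 := trless_mx (im_mx X).
have hK1 : herm K1 by apply/herm_trless_mx/herm_re_mx.
have hK2 : herm K2 by apply/herm_trless_mx/herm_im_mx.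
have trK1 : \tr K1 = 0 by apply: mxtrace_trless_mx.
have trK2 : \tr K2 = 0 by apply: mxtrace_trless_mx.
have trPK1 : \tr (Phi K1) = 0 by rewrite tpPhi.
have trPK2 : \tr (Phi K2) = 0 by rewrite tpPhi.
rewrite cext_trless_re_im -/K1 -/K2.
rewrite (mxtrace_mulmx_trmxC_decomp _ (hermPhi _ hK1) (hermPhi _ hK2) trPK1 trPK2).
rewrite [in X *m X ^t*](trless_re_im_mxE X) -/K1 -/K2 mxtrace_mulmx_trmxC_decomp //.
have le1 := traceless_herm_linear_le hK1 trK1.
have le2 := traceless_herm_linear_le hK2 trK2.
rewrite !fmorph_div /= !rmorph_nat.
have nz_n : (n%:R : C) != 0 by rewrite pnatr_eq0 -lt0n.
have nz_k : (k%:R : C) != 0 by rewrite pnatr_eq0 -lt0n.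
set t := \tr X; set h1 := \tr (K1 *m K1); set h2 := \tr (K2 *m K2).
have -> : ((k%:R)^-1 - lam / n%:R) * (t * t^*) +
          lam * (h1 + h2 + n%:R * (t / n%:R * (t^* / n%:R))) =
          lam * h1 + lam * h2 + k%:R * (t / k%:R * (t^* / k%:R)).
  by field; rewrite nz_k nz_n.
by rewrite lerD // lerD.
Qed.

End ChannelBound.

Lemma tunindexK a b (x : 'I_a) (i : 'I_b) : tunindex (mxvec_index x i) = (x, i).
Proof. by rewrite /tunindex /mxvec_index cast_ordK enum_rankK. Qed.

Section Blocks.
Variables (C : numClosedFieldType) (a b : nat).

Lemma big_mxvec_index (F : 'I_(a * b) -> C) :
  \sum_p F p = \sum_(x < a) \sum_(i < b) F (mxvec_index x i).
Proof.
rewrite pair_big (reindex (fun u : 'I_a * 'I_b => mxvec_index u.1 u.2)) //=.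
exists (@tunindex a b) => [[x i] _ | p _]; first by rewrite tunindexK.
by case/mxvec_indexP: p => x i; rewrite tunindexK.
Qed.

Lemma mxtrace_mulmx_blk (T S : 'M[C]_(a * b)) :
  \tr (T *m S) = \sum_i \sum_j \tr (blk T i j *m blk S j i).
Proof.
rewrite /mxtrace big_mxvec_index exchange_big; apply: eq_bigr => i _.
under eq_bigr do rewrite mxE big_mxvec_index exchange_big.
rewrite exchange_big; apply: eq_bigr => j _.
by apply: eq_bigr => x _; rewrite mxE; apply: eq_bigr => y _; rewrite !mxE.
Qed.

Lemma ptrace1_mxtrace_blk (rho : 'M[C]_(a * b)) i j :
  ptrace1 rho i j = \tr (blk rho i j).
Proof. by rewrite mxE; apply: eq_bigr => x _; rewrite mxE. Qed.

Lemma blk_herm (rho : 'M[C]_(a * b)) i j :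
  herm rho -> blk rho j i = (blk rho i j) ^t*.
Proof. by move/hermP => eqrho; apply/matrixP => x y; rewrite !mxE {1}eqrho !mxE. Qed.

Lemma blk_tens_id c (Phi : 'M[C]_a -> 'M[C]_c) (rho : 'M[C]_(a * b)) i j :
  blk (tens_id Phi rho) i j = cext Phi (blk rho i j).
Proof. by apply/matrixP => x y; rewrite mxE /tens_id mxE !tunindexK. Qed.

End Blocks.

Theorem lemma8 (C : numClosedFieldType) (n k m : nat)
  (Phi : 'M[C]_n -> 'M[C]_k) (M : 'I_(n ^ 2 - 1) -> 'M[C]_n)
  (lam : C) (rho : 'M[C]_(n * m)) :
  (0 < n)%N -> (0 < k)%N ->
  herm_linear Phi -> trace_preserving Phi -> unital Phi ->
  orthonormal_basis_H0 M ->
  largest_eigenvalue (A_Phi Phi M) lam ->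
  herm rho ->
  \tr (tens_id Phi rho *m tens_id Phi rho) <=
    ((k%:R)^-1 - lam / n%:R) * \tr (ptrace1 rho *m ptrace1 rho)
    + lam * \tr (rho *m rho).
Proof.
move=> n_gt0 k_gt0 linPhi tpPhi unPhi basisM lamP hrho.
have trP : \tr (ptrace1 rho *m ptrace1 rho) =
    \sum_i \sum_j \tr (blk rho i j) * (\tr (blk rho i j))^*.
  apply: eq_bigr => i _; rewrite mxE; apply: eq_bigr => j _.
  by rewrite !ptrace1_mxtrace_blk (blk_herm i j hrho) mxtrace_trmxC.
rewrite trP !mxtrace_mulmx_blk !mulr_sumr -big_split; apply: ler_sum => i _.
rewrite !mulr_sumr -big_split; apply: ler_sum => j _.
rewrite !blk_tens_id (blk_herm i j hrho) cext_trmxC //.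
exact: (mxtrace_cext_le n_gt0 k_gt0 linPhi tpPhi unPhi basisM lamP).
Qed.
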